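(* For every polynomial $F$ with real coefficients and every sufficiently large integer $N$, there exists a completely multiplicative function $f=f_{F,N}:\mathbb{N}\to\mathbb{C}$ with $|f(n)|\le1$ for all $n$ such that $$\left|\sum_{1\le n\le N}f(n)e(F(n))\right|\ge\frac1{10}\frac N{\log N}.$$
   Context: $e(x)=\exp(2\pi ix)$. A function is completely multiplicative if $f(1)=1$ and $f(mn)=f(m)f(n)$ for all $m,n$. *)

From Stdlib Require Import Reals List.
From Coquelicot Require Import Coquelicot.
Open Scope R_scope.

Definition e (x : R) : C := (cos (2 * PI * x), sin (2 * PI * x)).

(* A real polynomial given by its coefficient list [a0; a1; ...; ad]
   (lowest degree first), evaluated by Horner's scheme. *)
Definition poly_eval (c : list R) (x : R) : R :=
  fold_right (fun a acc => a + x * acc) 0 c.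

Definition completely_multiplicative (f : nat -> C) : Prop :=
  f 1%nat = 1%C /\
  forall m n : nat, (1 <= m)%nat -> (1 <= n)%nat -> f (m * n)%nat = (f m * f n)%C.

(* Let f be completely multiplicative with f(p) = e(-F(p)) for the primes sqrt N < p <= N
   and f(p) = 0 for all other primes.  An integer 2 <= n <= N with f(n) <> 0 has all its
   prime factors above sqrt N, so it is prime, and then f(n) e(F(n)) = 1.  Hence the sum is
   f(1) e(F(1)) plus the number of primes in (sqrt N, N], and Chebyshev's estimate
   2^m <= C(2m, m) <= (2m)^pi(2m) makes that count at least N / (10 log N) + 1 once N >= 10^8. *)

From Stdlib Require Import Reals List.
From Coquelicot Require Import Coquelicot.
Open Scope R_scope.
From Stdlib Require Import Lia Lra.
From mathcomp Require ssreflect ssrfun ssrbool eqtype ssrnat seq div prime binomial bigop.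
From mathcomp Require zify.

Module Primes.
Import ssreflect ssrfun ssrbool eqtype ssrnat seq div prime binomial bigop zify.
Local Open Scope nat_scope.

Definition primepi (n : nat) : nat := count prime (iota 0 n.+1).

Definition prime_above (s p : nat) : bool := prime p && (s < p).

Definition primes_in (s n : nat) : nat := count (prime_above s) (iota 0 n.+1).

Lemma expn2_le_bin_double m : 2 ^ m <= 'C(m.*2, m).
Proof.
elim: m => [|m IH] //.
have : m.+1 * 2 ^ m.+1 <= m.+1 * 'C(m.*2.+2, m.+1).
  rewrite -mul_bin_diag /= expnS -doubleS -mul2n -mulnA mulnCA leq_mul2l /=.
  by rewrite leq_mul2l /=; apply: leq_trans IH (leq_bin2l _ _).
by rewrite leq_mul2l doubleS.
Qed.

Lemma sum_divn_expn_eq0 p n a b : 0 < p -> n < p ^ a ->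
  \sum_(a <= k < b) n %/ p ^ k = 0.
Proof.
move=> p0 na; apply: big1_seq => k /andP[_]; rewrite mem_index_iota => /andP[ak _].
by rewrite divn_small // (leq_trans na) // leq_pexp2l.
Qed.

Lemma logn_fact_trunc p n t : prime p -> n < p ^ t.+1 ->
  logn p n`! = \sum_(1 <= k < t.+1) n %/ p ^ k.
Proof.
move=> pp nt; have p0 := prime_gt0 pp; rewrite logn_fact //.
have [tn | nt'] := leqP t n.
  by rewrite (big_cat_nat _ (n := t.+1)) //= (sum_divn_expn_eq0 _ _ _ _ p0 nt) addn0.
have nt1 : n.+1 <= t.+1 by rewrite ltnS ltnW.
rewrite [RHS](big_cat_nat _ (n := n.+1)) //= (@sum_divn_expn_eq0 _ _ n.+1 _ p0) ?addn0 //.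
exact: ltn_trans (ltnSn n) (ltn_expl _ (prime_gt1 pp)).
Qed.

Lemma logn_bin_double_le p m : prime p -> logn p 'C(m.*2, m) <= trunc_log p m.*2.
Proof.
move=> pp; have p0 := prime_gt0 pp; set t := trunc_log p m.*2.
have t2m : m.*2 < p ^ t.+1 by apply: trunc_log_ltn; apply: prime_gt1.
have tm : m < p ^ t.+1 by apply: leq_ltn_trans t2m; rewrite -addnn leq_addl.
have := bin_fact (leq_addr m m); rewrite addKn addnn => fact_eq.
have := congr1 (logn p) fact_eq.
rewrite !lognM ?muln_gt0 ?fact_gt0 ?bin_gt0 -?addnn ?leq_addl //.
rewrite addnn !(logn_fact_trunc _ _ _ pp tm) (logn_fact_trunc _ _ _ pp t2m) => legendre.
have digit_le : \sum_(1 <= k < t.+1) m.*2 %/ p ^ k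
    <= \sum_(1 <= k < t.+1) (2 * (m %/ p ^ k) + 1).
  apply: leq_sum => k _; have pk0 : 0 < p ^ k by rewrite expn_gt0 p0.
  have := ltn_pmod m pk0; have := ltn_pmod m.*2 pk0.
  have := divn_eq m (p ^ k); have := divn_eq m.*2 (p ^ k); nia.
rewrite big_split /= -big_distrr sum_nat_const_nat /= in digit_le; lia.
Qed.

Lemma expn_logn_bin_double_le p m : prime p -> 0 < m -> p ^ logn p 'C(m.*2, m) <= m.*2.
Proof.
move=> pp m0; apply: leq_trans (trunc_logP (prime_gt1 pp) _); last by rewrite double_gt0.
by rewrite leq_pexp2l ?prime_gt0 ?logn_bin_double_le.
Qed.

Lemma bin_double_le_expn_primepi m : 0 < m -> 'C(m.*2, m) <= m.*2 ^ primepi m.*2.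
Proof.
move=> m0; have C0 : 0 < 'C(m.*2, m) by rewrite bin_gt0 -addnn leq_addl.
rewrite {1}(prod_prime_decomp C0) prime_decompE big_map /=.
apply: leq_trans (_ : \prod_(p <- primes 'C(m.*2, m)) m.*2 <= _).
  rewrite big_seq [leqRHS]big_seq; apply: leq_prod => p.
  rewrite mem_primes => /andP[pp _].
  exact: expn_logn_bin_double_le.
rewrite big_const_seq count_predT iter_muln_1 leq_pexp2l ?double_gt0 //.
rewrite /primepi -size_filter; apply: uniq_leq_size (primes_uniq _) _ => p pC.
have pp : prime p by move: pC; rewrite mem_primes => /andP[].
rewrite mem_filter mem_iota add0n ltnS pp leq0n /=.
apply: (leq_trans _ (expn_logn_bin_double_le _ _ pp m0)).
by rewrite -[leqLHS]expn1 leq_pexp2l ?(prime_gt0 pp) // logn_gt0.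
Qed.

Lemma chebyshev_primepi m : 0 < m -> 2 ^ m <= m.*2 ^ primepi m.*2.
Proof.
by move=> m0; apply: leq_trans (expn2_le_bin_double m) (bin_double_le_expn_primepi _ m0).
Qed.

Lemma primepi_mono : {homo primepi : a b / a <= b}.
Proof.
move=> a b ab; rewrite /primepi -(subnKC ab) -addSn iotaD count_cat.
exact: leq_addr.
Qed.

Lemma primepi_le_primes_in s n : s <= n -> primepi n <= primes_in s n + s.+1.
Proof.
move=> sn; rewrite /primepi /primes_in -(subnKC sn) -addSn !iotaD !count_cat add0n.
have small : count prime (iota 0 s.+1) <= s.+1.
  by rewrite -[leqRHS](size_iota 0) count_size.
have large : count prime (iota s.+1 (n - s))
    = count (prime_above s) (iota s.+1 (n - s)).
  apply: eq_in_count => p; rewrite mem_iota => /andP[sp _].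
  by rewrite /prime_above (leq_trans _ sp) ?andbT.
lia.
Qed.

Definition pfactors_in (s N n : nat) : bool := all (fun p => s < p <= N) (primes n).

Lemma pfactors_in1 s N : pfactors_in s N 1.
Proof. by rewrite /pfactors_in (_ : primes 1 = [::]) //; apply/eqP; rewrite primes_eq0. Qed.

Lemma pfactors_inM s N m n : 0 < m -> 0 < n ->
  pfactors_in s N (m * n) = pfactors_in s N m && pfactors_in s N n.
Proof.
move=> m0 n0; rewrite /pfactors_in; apply/allP/andP => [mn | [/allP pm /allP pn]].
  by split; apply/allP => p p_in; apply: mn; rewrite primesM // p_in ?orbT.
by move=> p; rewrite primesM // => /orP[]; [apply: pm | apply: pn].
Qed.

Lemma pfactors_in_small s N n : 1 < n <= N -> N < s.+1 * s.+1 ->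
  pfactors_in s N n = prime_above s n.
Proof.
move=> /andP[n1 nN] Ns; rewrite /pfactors_in /prime_above.
case pn: (prime n); first by rewrite primes_prime //= nN !andbT.
apply/negbTE/negP => /allP all_in.
have pd_in : pdiv n \in primes n by rewrite mem_primes pdiv_prime // pdiv_dvd ltnW.
have /andP[s_pd _] := all_in _ pd_in.
have : pdiv n ^ 2 <= n by rewrite leqNgt; apply: contraFN pn; apply: ltn_pdiv2_prime; lia.
have : s.+1 * s.+1 <= pdiv n * pdiv n by apply: leq_mul.
rewrite expnS expn1; lia.
Qed.

End Primes.

Lemma INR_expn a b : INR (ssrnat.expn a b) = INR a ^ b.
Proof.
induction b as [|b IH]; [reflexivity|].
rewrite ssrnat.expnS, <- ssrnat.multE, mult_INR, IH; reflexivity.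
Qed.

Lemma primepi_ln_lower N : (2 <= N)%nat ->
  (INR N - 1) / 2 * ln 2 <= INR (Primes.primepi N) * ln (INR N).
Proof.
intros HN.
set (m := Nat.div2 N).
assert (Hm : (2 * m <= N <= 2 * m + 1)%nat)
  by (pose proof (Nat.div2_odd N); destruct (Nat.odd N); simpl in *; lia).
assert (Hm0 : (0 < m)%nat) by lia.
assert (Hcheb := Primes.chebyshev_primepi m (ssrbool.introT ssrnat.ltP Hm0)).
rewrite <- ssrnat.mul2n, <- ssrnat.multE in Hcheb.
apply (ssrbool.elimT ssrnat.leP), le_INR in Hcheb.
rewrite !INR_expn in Hcheb.
apply ln_le in Hcheb; [|apply pow_lt; simpl; lra].
rewrite !ln_pow in Hcheb by (apply lt_0_INR; lia).
replace (INR 2) with 2 in Hcheb by (simpl; lra).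
assert (Hpi : INR (Primes.primepi (2 * m)) <= INR (Primes.primepi N)).
{ apply le_INR, (ssrbool.elimT ssrnat.leP), Primes.primepi_mono.
  apply (ssrbool.introT ssrnat.leP); lia. }
assert (Hln : ln (INR (2 * m)) <= ln (INR N))
  by (apply ln_le; [apply lt_0_INR; lia | apply le_INR; lia]).
assert (HmN : INR N <= 2 * INR m + 1).
{ replace (2 * INR m + 1) with (INR (2 * m + 1)) by (rewrite plus_INR, mult_INR; simpl; ring).
  apply le_INR; lia. }
assert (0 < ln 2) by (rewrite <- ln_1; apply ln_increasing; lra).
assert (0 <= ln (INR (2 * m))) by (rewrite <- ln_1; apply ln_le; [lra|]; apply (le_INR 1); lia).
assert (0 <= INR (Primes.primepi (2 * m))) by apply pos_INR.
assert (0 <= INR (Primes.primepi N)) by apply pos_INR.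
nra.
Qed.

(* Written with [z = x^(1/4)], this is [(z^2 + 2) * 4 ln z <= 3/20 z^4 - 1/4], and [ln z < z]. *)
Lemma sqrt_ln_small x : 100000000 <= x -> (sqrt x + 2) * ln x <= 3 / 20 * x - 1 / 4.
Proof.
intros Hx.
set (z := sqrt (sqrt x)).
assert (Hz2 : z * z = sqrt x) by (apply sqrt_sqrt, sqrt_pos).
assert (Hz4 : x = z * z * (z * z)) by (rewrite Hz2; symmetry; apply sqrt_sqrt; lra).
assert (Hz0 : 0 <= z) by apply sqrt_pos.
assert (Hz100 : 100 <= z).
{ destruct (Rlt_or_le z 100) as [Hlt|]; [exfalso|assumption].
  assert (z * z < 10000) by nra. nra. }
assert (Hlnx : ln x = 4 * ln z).
{ rewrite Hz4, !ln_mult by nra. ring. }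
assert (Hlnz : ln z < z).
{ rewrite <- (ln_exp z) at 2. apply ln_increasing; [lra|]. pose proof (exp_ineq1 z). lra. }
assert (0 < ln z) by (rewrite <- ln_1; apply ln_increasing; lra).
rewrite <- Hz2, Hlnx, Hz4.
assert ((z * z + 2) * (4 * ln z) <= (z * z + 2) * (4 * z)) by (apply Rmult_le_compat_l; nra).
assert (z * z * z * 100 <= z * z * z * z) by (apply Rmult_le_compat_l; nra).
nra.
Qed.

Lemma primes_in_sqrt_lower N : 100000000 <= INR N ->
  INR (Primes.primes_in (Nat.sqrt N) N) - 1 >= 1 / 10 * (INR N / ln (INR N)).
Proof.
intros HN.
set (s := Nat.sqrt N).
assert (HN2 : (2 <= N)%nat) by (apply INR_le; simpl; lra).
pose proof (Nat.sqrt_spec N (Nat.le_0_l N)) as Hs; fold s in Hs.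
assert (Hcount := Primes.primepi_le_primes_in s N
                    (ssrbool.introT ssrnat.leP (Nat.sqrt_le_lin N))).
apply (ssrbool.elimT ssrnat.leP), le_INR in Hcount.
rewrite <- ssrnat.plusE, plus_INR, S_INR in Hcount.
assert (Hsx : INR s <= sqrt (INR N)).
{ rewrite <- (sqrt_square (INR s)) by apply pos_INR.
  apply sqrt_le_1_alt; rewrite <- mult_INR; apply le_INR; lia. }
pose proof (primepi_ln_lower N HN2) as Hcheb.
pose proof (sqrt_ln_small (INR N) HN) as Hsmall.
pose proof ln_lt_2 as Hln2.
set (L := ln (INR N)) in *.
assert (HL : 0 < L) by (unfold L; rewrite <- ln_1; apply ln_increasing; lra).
assert (Hmain : (INR (Primes.primes_in s N) - 1) * L >= INR N / 10) by nra.
apply Rle_ge, (Rmult_le_reg_r L); [assumption|].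
replace (1 / 10 * (INR N / L) * L) with (INR N / 10) by (field; lra).
lra.
Qed.

Lemma e_add x y : e (x + y) = (e x * e y)%C.
Proof.
unfold e, Cmult; simpl.
replace (2 * PI * (x + y)) with (2 * PI * x + 2 * PI * y) by ring.
rewrite cos_plus, sin_plus. f_equal; ring.
Qed.

Lemma e_0 : e 0 = 1%C.
Proof. unfold e. rewrite Rmult_0_r, cos_0, sin_0. reflexivity. Qed.

Lemma Cmod_e x : Cmod (e x) = 1.
Proof.
unfold e, Cmod; cbn [fst snd].
rewrite <- sqrt_1; f_equal.
rewrite <- (sin2_cos2 (2 * PI * x)); unfold Rsqr; ring.
Qed.

Definition additive_ext (F : list R) (N n : nat) : R :=
  sum_n (fun q => INR (prime.logn q n) * poly_eval F (INR q)) N.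

Lemma additive_ext1 F N : additive_ext F N 1 = 0.
Proof.
unfold additive_ext. rewrite (sum_n_ext _ (fun _ => 0)).
- rewrite sum_n_const. ring.
- intro q. rewrite prime.logn1. simpl. ring.
Qed.

Lemma additive_extM F N m n : (0 < m)%nat -> (0 < n)%nat ->
  additive_ext F N (m * n) = additive_ext F N m + additive_ext F N n.
Proof.
intros Hm Hn. unfold additive_ext.
rewrite (sum_n_ext _ (fun q => plus (INR (prime.logn q m) * poly_eval F (INR q))
                                    (INR (prime.logn q n) * poly_eval F (INR q)))).
- rewrite sum_n_plus. reflexivity.
- intro q.
  change (m * n)%nat with (ssrnat.muln m n).
  rewrite prime.lognM by (apply (ssrbool.introT ssrnat.ltP); assumption).
  rewrite <- ssrnat.plusE, plus_INR. unfold plus; simpl. ring.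
Qed.

Lemma sum_n_delta (a : R) p M :
  sum_n (fun q => if Nat.eqb q p then a else 0) M = if Nat.leb p M then a else 0.
Proof.
induction M as [|M IH].
- rewrite sum_O. destruct p; reflexivity.
- rewrite sum_Sn, IH; cbv beta.
  destruct (Nat.eqb_spec (S M) p), (Nat.leb_spec p M), (Nat.leb_spec p (S M)); try lia;
    unfold plus; simpl; lra.
Qed.

Lemma additive_ext_prime F N p : prime.prime p = true -> (p <= N)%nat ->
  additive_ext F N p = poly_eval F (INR p).
Proof.
intros Hp HpN. unfold additive_ext.
rewrite (sum_n_ext _ (fun q => if Nat.eqb q p then poly_eval F (INR p) else 0)).
- rewrite sum_n_delta. destruct (Nat.leb_spec p N); [reflexivity | lia].
- intro q. rewrite prime.logn_prime by assumption.
  change (eqtype.eq_op q p) with (Nat.eqb q p).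
  destruct (Nat.eqb_spec q p) as [->|]; simpl; ring.
Qed.

(* The function f_{F,N} of the theorem (with [s] the integer square root of [N]):
   [f p = e (- F p)] at primes [s < p <= N] and [f p = 0] at all other primes. *)
Definition untwist (F : list R) (N s n : nat) : C :=
  if Primes.pfactors_in s N n then e (- additive_ext F N n) else 0%C.

Lemma untwist_cm F N s : completely_multiplicative (untwist F N s).
Proof.
split.
- unfold untwist. rewrite Primes.pfactors_in1, additive_ext1, Ropp_0. apply e_0.
- intros m n Hm Hn. unfold untwist.
  change (m * n)%nat with (ssrnat.muln m n).
  rewrite Primes.pfactors_inM by (apply (ssrbool.introT ssrnat.ltP); assumption).
  destruct (Primes.pfactors_in s N m), (Primes.pfactors_in s N n); simpl;
    try (rewrite Cmult_0_l || rewrite Cmult_0_r; reflexivity).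
  rewrite additive_extM, Ropp_plus_distr by assumption. apply e_add.
Qed.

Lemma Cmod_untwist_le1 F N s n : Cmod (untwist F N s n) <= 1.
Proof.
unfold untwist. destruct (Primes.pfactors_in s N n).
- rewrite Cmod_e. lra.
- rewrite Cmod_0. lra.
Qed.

Lemma untwist_mul_e F N s n : (2 <= n <= N)%nat -> (N < S s * S s)%nat ->
  (untwist F N s n * e (poly_eval F (INR n)))%C
  = if Primes.prime_above s n then RtoC 1 else RtoC 0.
Proof.
intros Hn HN. unfold untwist.
rewrite Primes.pfactors_in_small.
2: { apply andb_true_intro; split; apply (ssrbool.introT ssrnat.leP); lia. }
2: { apply (ssrbool.introT ssrnat.ltP); assumption. }
destruct (Primes.prime_above s n) eqn:Hp.
- unfold Primes.prime_above in Hp. apply andb_prop in Hp as [Hprime _].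
  rewrite additive_ext_prime, <- e_add, Rplus_opp_l by (assumption || lia). apply e_0.
- apply Cmult_0_l.
Qed.

Lemma sum_n_m_indicator (b : nat -> bool) N : b 0%nat = false -> b 1%nat = false ->
  sum_n_m (fun n => if b n then RtoC 1 else RtoC 0) 2 N
  = RtoC (INR (seq.count b (seq.iota 0 (S N)))).
Proof.
intros Hb0 Hb1. induction N as [|N IH].
- rewrite sum_n_m_zero by lia. simpl. rewrite Hb0. reflexivity.
- destruct N as [|N].
  + rewrite sum_n_m_zero by lia. simpl. rewrite Hb0, Hb1. reflexivity.
  + rewrite sum_n_Sm, IH by lia.
    rewrite <- (Nat.add_1_r (S (S N))), seq.iotaD, seq.count_cat, <- ssrnat.plusE, plus_INR.
    simpl. destruct (b (S (S N))); unfold plus; simpl; rewrite <- RtoC_plus; f_equal; simpl; ring.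
Qed.

Lemma Cmod_add_real_ge (z : C) (r : R) : Cmod z <= 1 -> 0 <= r -> Cmod (z + RtoC r) >= r - 1.
Proof.
intros Hz Hr.
assert (Htri : Cmod (RtoC r) <= Cmod (z + RtoC r) + Cmod (- z)).
{ replace (RtoC r) with ((z + RtoC r) + - z)%C at 1 by ring. apply Cmod_triangle. }
rewrite Cmod_opp, Cmod_R, Rabs_right in Htri by lra. lra.
Qed.

Theorem mainTheorem17 :
  forall F : list R,
  exists N0 : nat, forall N : nat, (N0 <= N)%nat ->
  exists f : nat -> C,
    completely_multiplicative f /\
    (forall n : nat, (1 <= n)%nat -> Cmod (f n) <= 1) /\
    Cmod (sum_n_m (fun n : nat => (f n * e (poly_eval F (INR n)))%C) 1 N)
      >= (1 / 10) * (INR N / ln (INR N)).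
Proof.
intros F. exists (10 ^ 8)%nat. intros N HN0.
assert (HN : 100000000 <= INR N)
  by (apply le_INR in HN0; rewrite pow_INR in HN0; simpl in HN0; lra).
set (s := Nat.sqrt N).
pose proof (Nat.sqrt_spec N (Nat.le_0_l N)) as Hs; fold s in Hs.
exists (untwist F N s). split; [apply untwist_cm|]. split; [intros; apply Cmod_untwist_le1|].
assert (Hsum : sum_n_m (fun n => (untwist F N s n * e (poly_eval F (INR n)))%C) 2 N
               = RtoC (INR (Primes.primes_in s N))).
{ unfold Primes.primes_in. rewrite <- sum_n_m_indicator by reflexivity.
  apply sum_n_m_ext_loc. intros n Hn. apply untwist_mul_e; lia. }
rewrite sum_Sn_m by (apply INR_le; simpl; lra).
unfold plus; cbn -[sum_n_m]. rewrite Hsum.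
apply Rge_trans with (INR (Primes.primes_in s N) - 1).
- apply Cmod_add_real_ge; [|apply pos_INR].
  rewrite Cmod_mult, Cmod_e, Rmult_1_r. apply Cmod_untwist_le1.
- apply primes_in_sqrt_lower, HN.
Qed.
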